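(* Let $q$ be a prime power, $s,\ell$ positive integers, $\alpha,\beta\in\{1,-1\}\subseteq\mathbb{F}_q$, let $r$ be the multiplicative order of $\beta$ (so $r=1$ if $\beta=1$, $r=2$ if $\beta=-1\neq 1$), and assume $q\equiv 1\pmod{r\ell}$. Let $\omega\in\mathbb{F}_q$ be a primitive $r\ell$-th root of unity with $\omega^\ell=\beta$, and $\eta_k(y)=\prod_{j\ne k,\,0\le j\le \ell-1}\frac{y-\omega^{1+jr}}{\omega^{1+kr}-\omega^{1+jr}}$ for $0\le k\le\ell-1$. Let $\mathcal{C}$ be an ideal of $\mathcal{R}=\mathbb{F}_q[x,y]/\langle x^s-\alpha,y^\ell-\beta\rangle$; for $j=0,\dots,\ell-1$ let $p_j(x)$ be the monic divisor of $x^s-\alpha$ generating $I_j=\{f(x)\in\mathbb{F}_q[x]/\langle x^s-\alpha\rangle:\eta_j(y)f(x)\in\mathcal{C}\}$, $a_j=\deg p_j(x)$, and $p_j'(x)\in\mathbb{F}_q[x]$ with $p_j(x)p_j'(x)=x^s-\alpha$. Then the dual code satisfies $$\mathcal{C}^\perp=\big\langle p_0'^*(x)\eta_0^*(y),\ p_1'^*(x)\eta_1^*(y),\ \dots,\ p_{\ell-1}'^*(x)\eta_{\ell-1}^*(y)\big\rangle,$$ and the elements $x^i p_j'^*(x)\eta_j^*(y)$, $0\le j\le \ell-1$, $0\le i\le a_j-1$, form a basis of $\mathcal{C}^\perp$ over $\mathbb{F}_q$ (i.e. the matrix with these rows is a generator matrix of $\mathcal{C}^\perp$).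
   Context: An element $\sum_{i,j}c_{i,j}x^iy^j$ of $\mathcal{R}$ ($0\le i\le s-1$, $0\le j\le\ell-1$) is identified with the vector $(c_{i,j})$ of length $s\ell$; ideals of $\mathcal{R}$ are two-dimensional $(\alpha,\beta)$-constacyclic codes. $\mathcal{C}^\perp$ is the dual with respect to the Euclidean inner product $\sum_{i,j}c_{i,j}d_{i,j}$; for $\alpha,\beta\in\{\pm1\}$ it is again an ideal of $\mathcal{R}$. For a nonzero polynomial $f$ of degree $k$, its reciprocal is $f^*(x)=x^kf(1/x)$ (so $\eta_j^*(y)=y^{\ell-1}\eta_j(1/y)$). *)

From HB Require Import structures.
From mathcomp Require Import all_boot all_order all_algebra.
Set Implicit Arguments. Unset Strict Implicit. Unset Printing Implicit Defensive.
Import Order.TTheory GRing.Theory.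
Local Open Scope ring_scope.

(* Elements of R = F[x,y]/<x^s - a, y^l - b> are represented by their
   coefficient matrices c : 'M[F]_(s,l), c i j = coefficient of x^i y^j. *)

Definition md (F : fieldType) (n : nat) (a : F) : {poly F} := 'X^n - a%:P.

(* class in R of f(x) g(y) *)
Definition emb (F : fieldType) (s l : nat) (a b : F) (f g : {poly F})
  : 'M[F]_(s, l) :=
  \matrix_(i < s, j < l) ((f %% md s a)`_i * (g %% md l b)`_j).

Definition px (F : fieldType) (s l : nat) (c : 'M[F]_(s, l)) (j : 'I_l)
  : {poly F} := \sum_(i < s) c i j *: 'X^i.

Definition mulR (F : fieldType) (s l : nat) (a b : F) (c d : 'M[F]_(s, l))
  : 'M[F]_(s, l) :=
  \sum_(j1 < l) \sum_(j2 < l) emb s l a b (px c j1 * px d j2) 'X^(j1 + j2).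

Definition isIdealR (F : finFieldType) (s l : nat) (a b : F)
  (C : {set 'M[F]_(s, l)}) : Prop :=
  [/\ 0 \in C,
      (forall c d, c \in C -> d \in C -> c + d \in C) &
      (forall r c, c \in C -> mulR a b r c \in C)].

Definition dotR (F : fieldType) (s l : nat) (c d : 'M[F]_(s, l)) : F :=
  \sum_(i < s) \sum_(j < l) c i j * d i j.

Definition dualR (F : finFieldType) (s l : nat) (C : {set 'M[F]_(s, l)})
  : {set 'M[F]_(s, l)} :=
  [set d | [forall c, (c \in C) ==> (dotR c d == 0)]].

Definition recip_n (F : fieldType) (n : nat) (f : {poly F}) : {poly F} :=
  \poly_(i < n.+1) f`_(n - i).

Definition recip (F : fieldType) (f : {poly F}) : {poly F} :=
  recip_n (size f).-1 f.

Definition etaL (F : fieldType) (l r : nat) (w : F) (k : 'I_l) : {poly F} :=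
  \prod_(j < l | j != k)
     (('X - (w ^+ (1 + j * r))%:P) * ((w ^+ (1 + k * r) - w ^+ (1 + j * r))^-1)%:P).

From HB Require Import structures.
From mathcomp Require Import all_boot all_order all_algebra.
From mathcomp Require Import zify ring.
Set Implicit Arguments. Unset Strict Implicit. Unset Printing Implicit Defensive.
Import Order.TTheory GRing.Theory.
Local Open Scope ring_scope.

(* Let omega_j = w^(1+jr), the roots of y^l - beta, and kappa_j the leading
   coefficient of eta_j.  The coefficients of eta_j^* are kappa_j omega_j^t, so
   <c, u(x) eta_j^*(y)> = kappa_j <c(x, omega_j), u>, and the coefficient matrices of
   the eta_j and of the eta_j^* are inverse to each other up to the kappa_j; hence
   every word is a sum of words u_j(x) eta_j^*(y).  As y eta_j = omega_j eta_j in R,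
   eta_j(y) c(x, omega_j) lies in C for c in C, i.e. p_j divides c(x, omega_j).  So
   C^perp is the sum of the u_j(x) eta_j^*(y) with u_j orthogonal to the code <p_j>
   of F[x]/(x^s - alpha), and these u_j are the H p_j'^* with deg H < deg p_j: write
   sum_i a_i b_i as the coefficient of x^(s-1) in a(x) x^(s-1) b(1/x) mod x^s - alpha.
   The dual is an ideal since p_j'^* divides (x^s - alpha)^* = -alpha (x^s - alpha). *)

Lemma expr2_eq1_neq0 (F : fieldType) (x : F) : x ^+ 2 = 1 -> x != 0.
Proof. by move=> x2; apply: contra_eq_neq x2 => ->; rewrite expr0n eq_sym oner_eq0. Qed.

Lemma modp_mulml (F : fieldType) (d f g : {poly F}) : ((f %% d) * g) %% d = (f * g) %% d.
Proof. by rewrite mulrC modp_mul mulrC. Qed.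

Lemma modp_dvdp_sub (F : fieldType) (d f f' : {poly F}) : d %| f - f' -> f %% d = f' %% d.
Proof. by move=> dvd; rewrite -(subrK f' f) modpD (modp_eq0 dvd) add0r. Qed.

Section Reciprocal.
Variable F : fieldType.
Implicit Types f g : {poly F}.

Lemma poly_sum_coef n f : (size f <= n)%N -> f = \sum_(i < n) f`_i *: 'X^i.
Proof.
move=> le_f_n; rewrite -poly_def; apply/polyP => i; rewrite coef_poly.
by case: ltnP => // le_n_i; rewrite nth_default // (leq_trans le_f_n).
Qed.

Lemma size_sum_scale_Xn n (k : 'I_n -> F) : (size (\sum_(i < n) k i *: 'X^i)%R <= n)%N.
Proof.
apply/leq_sizeP => m le_n_m; rewrite coef_sum big1 // => i _.
by rewrite coefZ coefXn gtn_eqF ?mulr0 // (leq_trans (ltn_ord i)).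
Qed.

Lemma coef_sum_scale_Xn n (k : 'I_n -> F) (i : 'I_n) : (\sum_(m < n) k m *: 'X^m)`_i = k i.
Proof.
rewrite coef_sum (bigD1 i) //= coefZ coefXn eqxx mulr1 big1 ?addr0 // => m m_neq_i.
by rewrite coefZ coefXn eq_sym val_eqE (negPf m_neq_i) mulr0.
Qed.

Lemma coef_recip_n n f i :
  (recip_n n f)`_i = if (i <= n)%N then f`_(n - i) else 0.
Proof. by rewrite /recip_n coef_poly ltnS. Qed.

Lemma size_recip_n n f : (size (recip_n n f) <= n.+1)%N.
Proof. exact: size_poly. Qed.

Lemma recip_nK n f : (size f <= n.+1)%N -> recip_n n (recip_n n f) = f.
Proof.
move=> le_f_n; apply/polyP => i; rewrite !coef_recip_n.
case: leqP => lt_n_i; first by rewrite leq_subr subKn.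
by rewrite nth_default // (leq_trans le_f_n).
Qed.

Fact recip_n_is_semilinear n : semilinear (@recip_n F n).
Proof.
split=> [k f|f g]; apply/polyP => i; rewrite !(coef_recip_n, coefZ, coefD);
  by case: ifP; rewrite ?mulr0 ?addr0.
Qed.

HB.instance Definition _ n :=
  GRing.isSemilinear.Build F {poly F} {poly F} _ (@recip_n F n) (recip_n_is_semilinear n).

Lemma recip_nXn n e : (e <= n)%N -> recip_n n ('X^e : {poly F}) = 'X^(n - e).
Proof.
move=> le_e_n; apply/polyP => i; rewrite coef_recip_n !coefXn.
case: leqP => [le_i_n|lt_n_i]; last by case: eqP => //; lia.
by congr (_%:R); apply/eqP/eqP; lia.
Qed.

Lemma recip_nM m n f g : (size f <= m.+1)%N -> (size g <= n.+1)%N ->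
  recip_n (m + n) (f * g) = recip_n m f * recip_n n g.
Proof.
move=> le_f_m le_g_n.
rewrite (poly_sum_coef le_f_m) (poly_sum_coef le_g_n) mulr_suml !linear_sum.
rewrite mulr_suml; apply: eq_bigr => i _; rewrite mulr_sumr linear_sum mulr_sumr.
apply: eq_bigr => k _; rewrite -scalerAl -scalerAr !linearZ /= -scalerAl -scalerAr.
case: i k => [i /= lt_i_m] [k /= lt_k_n].
rewrite -exprD !recip_nXn -?exprD; try lia.
by congr (_ *: (_ *: 'X^_)); lia.
Qed.

Lemma size_recip f : f`_0 != 0 -> size (recip f) = size f.
Proof.
move=> f0_neq0; have f_neq0 : f != 0 by apply: contraNneq f0_neq0 => ->; rewrite coef0.
by rewrite size_poly_eq ?subnn // prednK // size_poly_gt0.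
Qed.

End Reciprocal.

Section CyclicDual.
Variables (F : fieldType) (s : nat) (al : F).
Hypothesis s_gt0 : (0 < s)%N.
Local Notation M := (md s al).
Implicit Types f g u v H : {poly F}.

Lemma size_md : size M = s.+1.
Proof. exact: size_XnsubC. Qed.

Lemma md_neq0 : M != 0.
Proof. by rewrite -size_poly_gt0 size_md. Qed.

Lemma size_modp_md v : (size (v %% M)%R <= s)%N.
Proof. by have := ltn_modp v M; rewrite md_neq0 size_md. Qed.

Lemma modp_md_small v : (size v <= s)%N -> v %% M = v.
Proof. by move=> le_v_s; rewrite modp_small // size_md ltnS. Qed.

Lemma coef_modp_md_pred v : (size v <= s + s.-1)%N -> (v %% M)`_s.-1 = v`_s.-1.
Proof.
move=> le_v.
have le_quo : (size (v %/ M)%R <= s.-1)%N.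
  by rewrite size_divp ?md_neq0 // size_md /= leq_subLR.
have quo0 : ((v %/ M) * M)`_s.-1 = 0.
  rewrite {2}/md mulrBr coefB coefMXn coefMC ifT; last by lia.
  by rewrite (nth_default _ le_quo) mul0r subr0.
by rewrite [in RHS](divp_eq v M) coefD quo0 add0r.
Qed.

Lemma sum_coefM_recip f g : (size f <= s)%N -> (size g <= s)%N ->
  \sum_(i < s) f`_i * g`_i = ((f * recip_n s.-1 g) %% M)`_s.-1.
Proof.
move=> le_f le_g; rewrite coef_modp_md_pred; last first.
  by apply: leq_trans (size_polyMleq _ _) _; have := size_recip_n s.-1 g; lia.
rewrite coefM (prednK s_gt0); apply: eq_bigr => j _.
by rewrite coef_recip_n ifT; [congr (_ * g`_ _) | ]; have := ltn_ord j; lia.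
Qed.

Lemma coef_mulXn_pred f m : (size f <= s)%N -> (m < s)%N ->
  (('X^(s.-1 - m) * f) %% M)`_s.-1 = f`_m.
Proof.
move=> le_f lt_m_s; rewrite coef_modp_md_pred; last first.
  by apply: leq_trans (size_polyMleq _ _) _; rewrite size_polyXn; lia.
by rewrite coefXnM ifF; [congr (f`_ _) | ]; lia.
Qed.

Lemma modp_md_eq0 v : (forall i : 'I_s, (v %% M)`_i = 0) -> v %% M = 0.
Proof.
move=> coef_v0; apply/polyP => n; rewrite coef0.
case: (ltnP n s) => [lt_n_s | le_s_n]; first exact: (coef_v0 (Ordinal lt_n_s)).
by rewrite nth_default // (leq_trans (size_modp_md _)).
Qed.

Hypothesis al2 : al ^+ 2 = 1.

Lemma recip_md : recip_n s M = - al *: M.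
Proof.
apply/polyP => i; rewrite coef_recip_n coefZ /md !(coefB, coefXn, coefC).
have [-> | i_neq0] := eqVneq i 0%N.
  rewrite subn0 eqxx /=.
  have -> : (0 == s)%N = false by lia.
  have -> : (s == 0)%N = false by lia.
  by rewrite subr0 sub0r mulrNN -expr2 al2.
case: leqP => [le_i_s | lt_s_i].
  have -> : (s - i == s)%N = false by lia.
  have -> : (s - i == 0)%N = (i == s)%N by apply/eqP/eqP; lia.
  by rewrite sub0r subr0; case: eqP; rewrite ?mulr1 ?mulr0 ?oppr0.
have -> : (i == s)%N = false by lia.
by rewrite /= subr0 mulr0.
Qed.

Section Factorization.
Variables p q : {poly F}.
Hypothesis pq : p * q = M.

Lemma md_factor_neq0 : p != 0 /\ q != 0.
Proof.
by split; apply: contraTneq md_neq0 => eq0; rewrite -pq eq0 ?(mul0r, mulr0) eqxx.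
Qed.

Lemma size_md_factors : (size p + size q = s.+2)%N.
Proof.
have [p_neq0 q_neq0] := md_factor_neq0.
have := size_mul p_neq0 q_neq0; rewrite pq size_md.
have := size_poly_gt0 p; have := size_poly_gt0 q; rewrite p_neq0 q_neq0.
set a := size p; set b := size q; lia.
Qed.

Lemma size_mul_recip H : (size H <= (size p).-1)%N -> (size (H * recip q)%R <= s)%N.
Proof.
have := size_polyMleq H (recip q); have := size_recip_n (size q).-1 q.
move: size_md_factors (size_poly_gt0 p) (size_poly_gt0 q).
rewrite md_factor_neq0.1 md_factor_neq0.2 /recip.
by set a := size p; set b := size q; set c := size H; lia.
Qed.

Lemma dual_factor_recip u : (size u <= s)%N ->
  (forall g, \sum_(i < s) ((g * p) %% M)`_i * u`_i = 0) ->
  exists2 H : {poly F}, (size H <= (size p).-1)%N & u = H * recip q.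
Proof.
move=> le_u orth_u; have [p_neq0 q_neq0] := md_factor_neq0.
have size_pq := size_md_factors.
set uh := recip_n s.-1 u.
have le_uh : (size uh <= s)%N by have := size_recip_n s.-1 u; rewrite prednK.
have puh0 : (p * uh) %% M = 0.
  apply/polyP => m; rewrite coef0; case: (ltnP m s) => [lt_m_s | le_s_m].
    rewrite -coef_mulXn_pred ?size_modp_md // modp_mul mulrA.
    by rewrite -modp_mulml -sum_coefM_recip ?size_modp_md.
  by rewrite nth_default // (leq_trans (size_modp_md _)).
have /dvdpP [k uh_kq] : q %| uh.
  by rewrite -(dvdp_mul2l _ _ p_neq0) pq; apply/modp_eq0P.
have u_uh : u = recip_n s.-1 uh by rewrite recip_nK // prednK.
have [k0 | k_neq0] := eqVneq k 0.
  by exists 0; rewrite ?size_poly0 // u_uh uh_kq k0 !mul0r linear0.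
have [le_k p_gt1] : (size k <= (size p).-1)%N /\ (1 < size p)%N.
  move: (size_mul k_neq0 q_neq0) le_uh size_pq (size_poly_gt0 k) (size_poly_gt0 q).
  rewrite -uh_kq k_neq0 q_neq0.
  by set a := size p; set b := size q; set c := size k; set e := size uh; split; lia.
have q_gt0 : (0 < size q)%N by rewrite size_poly_gt0.
exists (recip_n (size p).-2 k).
  by apply: leq_trans (size_recip_n _ _) _; lia.
rewrite u_uh uh_kq (_ : s.-1 = ((size p).-2 + (size q).-1)%N); last lia.
by rewrite recip_nM //; lia.
Qed.

Lemma recip_factor_orth H g : (size H <= (size p).-1)%N ->
  \sum_(i < s) ((g * p) %% M)`_i * (H * recip q)`_i = 0.
Proof.
move=> le_H; have [p_neq0 q_neq0] := md_factor_neq0.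
have size_pq := size_md_factors.
have [-> | H_neq0] := eqVneq H 0.
  by apply: big1 => i _; rewrite mul0r coef0 mulr0.
have := size_poly_gt0 H; have := size_poly_gt0 q; rewrite H_neq0 q_neq0 => H_gt0 q_gt0.
rewrite sum_coefM_recip ?size_modp_md ?size_mul_recip //.
have -> : recip_n s.-1 (H * recip q) = recip_n (size p).-2 H * q.
  rewrite (_ : s.-1 = ((size p).-2 + (size q).-1)%N); last lia.
  by rewrite recip_nM ?size_recip_n ?recip_nK //; lia.
by rewrite modp_mulml mulrACA pq modp_mull coef0.
Qed.

Lemma coef0_factor_neq0 : q`_0 != 0.
Proof.
have : (p * q)`_0 = - al.
  rewrite pq /md coefB coefXn coefC /=.
  have -> : (0 == s)%N = false by lia.
  by rewrite sub0r.
rewrite coefM big_ord1 subnn => pq0; apply: contra_neq (expr2_eq1_neq0 al2) => q0.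
by apply/eqP; rewrite -oppr_eq0 -pq0 q0 mulr0.
Qed.

Lemma recip_factor_neq0 : recip q != 0.
Proof.
by rewrite -size_poly_gt0 size_recip ?coef0_factor_neq0 // size_poly_gt0 md_factor_neq0.2.
Qed.

Lemma recip_factor_dvdp : recip q %| M.
Proof.
have [p_neq0 q_neq0] := md_factor_neq0.
have size_pq := size_md_factors.
have : recip p * recip q = - al *: M.
  rewrite -recip_md -pq /recip (_ : s = ((size p).-1 + (size q).-1)%N).
    by rewrite recip_nM // prednK // size_poly_gt0.
  by move: size_pq (size_poly_gt0 p) (size_poly_gt0 q); rewrite p_neq0 q_neq0; lia.
move/(congr1 (dvdp (recip q))).
by rewrite dvdp_mull // dvdpZr // oppr_eq0 expr2_eq1_neq0.
Qed.

Lemma modp_mul_recip_factor f :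
  exists2 H : {poly F}, (size H <= (size p).-1)%N & (f * recip q) %% M = H * recip q.
Proof.
have H_small := size_modp_md (f * recip q).
have /dvdpP [H H_eq] : recip q %| (f * recip q) %% M.
  by rewrite -(dvdp_mod _ recip_factor_dvdp) dvdp_mulIr.
rewrite H_eq in H_small *.
exists H => //; have [-> | H_neq0] := eqVneq H 0; first by rewrite size_poly0.
move: H_small size_md_factors (size_poly_gt0 H).
rewrite size_mul ?recip_factor_neq0 // size_recip ?coef0_factor_neq0 // H_neq0.
by set a := size p; set b := size q; set c := size H; lia.
Qed.

End Factorization.
End CyclicDual.

Lemma recip_n1_XsubC (F : fieldType) (c : F) : recip_n 1 ('X - c%:P) = 1 - c *: 'X.
Proof.
apply/polyP => i; rewrite coef_recip_n !(coefB, coefX, coefC, coefZ, coef1).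
by case: i => [|[|i]] //=; rewrite ?subn0 ?mulr0 ?mulr1 ?subr0 ?sub0r.
Qed.

Section Lagrange.
Variables (F : fieldType) (l r : nat) (w be : F).
Hypotheses (l_gt0 : (0 < l)%N) (w_prim : (r * l)%N.-primitive_root w).
Hypothesis w_l : w ^+ l = be.
Implicit Types j k m : 'I_l.
Local Notation eta := (etaL r w).
Local Notation etas j := (recip_n l.-1 (etaL r w j)).

Definition node j := w ^+ (1 + j * r).

Definition etaL_lead j := \prod_(m < l | m != j) (node j - node m)^-1.

Lemma node_expl j : node j ^+ l = be.
Proof.
rewrite /node -exprM mulnDl mul1n exprD w_l -mulnA mulnC exprM.
by rewrite (prim_expr_order w_prim) expr1n mulr1.
Qed.

Lemma node_inj : injective node.
Proof.
have r_gt0 : (0 < r)%N by have := prim_order_gt0 w_prim; rewrite muln_gt0 => /andP[].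
move=> j k /eqP; rewrite (eq_prim_root_expr w_prim) eqn_modDl.
rewrite !modn_small; first (by rewrite eqn_pmul2r // => /eqP /val_inj);
  by have := ltn_ord j; have := ltn_ord k; nia.
Qed.

Lemma node_neq0 j : node j != 0.
Proof. by rewrite expf_neq0 // (prim_root_eq0 w_prim) -lt0n (prim_order_gt0 w_prim). Qed.

Lemma md_prod_node : md l be = \prod_(m < l) ('X - (node m)%:P).
Proof.
set nodes := [seq node m | m <- enum 'I_l].
have <- : \prod_(z <- nodes) ('X - z%:P) = \prod_(m < l) ('X - (node m)%:P).
  by rewrite big_map enumT.
apply/eqP; rewrite eq_sym -eqp_monic ?monic_prod_XsubC ?monicXnsubC //.
rewrite -dvdp_size_eqp; last first.
  apply: uniq_roots_dvdp.
    by apply/allP => _ /mapP [m _ ->]; rewrite /root /md !hornerE node_expl subrr.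
  by rewrite uniq_rootsE map_inj_uniq ?enum_uniq //; exact: node_inj.
by rewrite size_prod_XsubC size_map size_enum_ord size_XnsubC.
Qed.

Lemma etaL_lead_neq0 j : etaL_lead j != 0.
Proof.
apply/prodf_neq0 => m m_neq_j; rewrite invr_eq0 subr_eq0.
by apply: contra m_neq_j => /eqP /node_inj ->.
Qed.

Lemma etaLE j : eta j = (\prod_(m < l | m != j) ('X - (node m)%:P)) * (etaL_lead j)%:P.
Proof. by rewrite /etaL big_split /= rmorph_prod. Qed.

Lemma etaL_mulXsubC j : eta j * ('X - (node j)%:P) = etaL_lead j *: md l be.
Proof. by rewrite etaLE md_prod_node [in RHS](bigD1 j) //= -mul_polyC; ring. Qed.

Lemma size_etaL j : (size (eta j) <= l)%N.
Proof.
have [-> | eta_neq0] := eqVneq (eta j) 0; first by rewrite size_poly0.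
have := congr1 (fun q : {poly F} => size q) (etaL_mulXsubC j).
rewrite size_mul ?polyXsubC_eq0 // size_XsubC addn2 size_scale ?etaL_lead_neq0 //.
by rewrite size_XnsubC // => -[->].
Qed.

Lemma etaL_node j k : (eta j).[node k] = (j == k)%:R.
Proof.
rewrite etaLE hornerM hornerC horner_prod.
have [<- | j_neq_k] := eqVneq j k; last first.
  by rewrite (bigD1 k) 1?eq_sym //= hornerXsubC subrr !mul0r.
rewrite /etaL_lead -big_split /=; apply: big1 => m m_neq_j.
rewrite hornerXsubC mulfV // subr_eq0.
by apply: contra m_neq_j => /eqP /node_inj ->.
Qed.

Lemma sum_node_expn_etaL t : (t < l)%N -> \sum_j node j ^+ t *: eta j = 'X^t.
Proof.
move=> lt_t_l; apply/eqP; rewrite -subr_eq0; apply/eqP.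
set Q := _ - _; apply: contraTeq isT => Q_neq0.
have size_Q : (size Q <= l)%N.
  apply/leq_sizeP => i le_l_i; rewrite /Q coefB coef_sum coefXn.
  have -> : (i == t)%N = false by lia.
  rewrite subr0; apply: big1 => j _; rewrite coefZ nth_default ?mulr0 //.
  exact: leq_trans (size_etaL j) le_l_i.
suff : (l < size Q)%N by rewrite ltnNge size_Q.
have := max_poly_roots Q_neq0 (rs := [seq node m | m <- enum 'I_l]).
rewrite size_map size_enum_ord; apply.
  apply/allP => _ /mapP [k _ ->]; rewrite /root /Q !hornerE horner_sum.
  rewrite (bigD1 k) //= big1 => [|j /negPf j_neq_k]; last first.
    by rewrite hornerZ etaL_node j_neq_k mulr0.
  by rewrite hornerZ etaL_node eqxx mulr1 addr0 subrr.
by rewrite map_inj_uniq ?enum_uniq //; exact: node_inj.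
Qed.

Lemma sum_coef_etaL_node (t t' : 'I_l) : \sum_j (eta j)`_t * node j ^+ t' = (t == t')%:R.
Proof.
rewrite -coefXn -(sum_node_expn_etaL (ltn_ord t')) coef_sum.
by apply: eq_bigr => j _; rewrite coefZ mulrC.
Qed.

Lemma coef_etaL_pred j : (eta j)`_l.-1 = etaL_lead j.
Proof.
have := congr1 (coefp l) (etaL_mulXsubC j).
rewrite /= mulrBr coefB coefMX coefMC (nth_default _ (size_etaL j)) mul0r subr0.
by rewrite coefZ coefB coefXn coefC eqxx !(gtn_eqF l_gt0) subr0 mulr1.
Qed.

Lemma coef_etaL_succ j t : (t.+1 < l)%N -> (eta j)`_t = node j * (eta j)`_t.+1.
Proof.
move=> lt_t_l; have := congr1 (coefp t.+1) (etaL_mulXsubC j).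
rewrite /= mulrBr coefB coefMX coefMC coefZ coefB coefXn coefC /= (ltn_eqF lt_t_l).
by rewrite subr0 mulr0 => /eqP; rewrite subr_eq0 mulrC => /eqP.
Qed.

Lemma coef_recip_etaL j t : (t < l)%N -> (etas j)`_t = etaL_lead j * node j ^+ t.
Proof.
move=> lt_t_l; rewrite coef_recip_n ifT; last by lia.
elim: t lt_t_l => [|t IH] lt_t_l; first by rewrite subn0 coef_etaL_pred mulr1.
rewrite coef_etaL_succ; last by lia.
rewrite (_ : (l.-1 - t.+1).+1 = l.-1 - t)%N; last by lia.
by rewrite IH ?exprS 1?mulrCA //; lia.
Qed.

Lemma size_recip_etaL j : (size (etas j) <= l)%N.
Proof. by apply: leq_trans (size_recip_n _ _) _; rewrite prednK. Qed.

Lemma sum_coef_etaL_recip k j :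
  \sum_(t < l) (eta k)`_t * (etas j)`_t = (k == j)%:R * etaL_lead j.
Proof.
under eq_bigr do rewrite coef_recip_etaL // mulrCA.
rewrite -mulr_sumr -etaL_node mulrC (horner_coef_wide _ (size_etaL k)).
by congr (_ * _); apply: eq_bigr => t _; rewrite mulrC.
Qed.

Hypothesis be2 : be ^+ 2 = 1.

(* [etas j (1 - node j X)] is the reciprocal of [eta j (X - node j) = kappa (X^l - be)] *)
Lemma md_dvdp_recip_etaL j : md l be %| ('X - (node j)^-1%:P) * etas j.
Proof.
have recip_eq : etas j * (1 - node j *: 'X) = etaL_lead j *: (- be *: md l be).
  rewrite -recip_n1_XsubC -recip_nM ?size_XsubC ?prednK ?size_etaL //.
  by rewrite addn1 prednK // etaL_mulXsubC linearZ /= recip_md.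
have XsubC_eq : 1 - node j *: 'X = - node j *: ('X - (node j)^-1%:P).
  by rewrite scalerBr !scaleNr opprK scale_polyC mulfV ?node_neq0 // polyC1 addrC.
rewrite XsubC_eq -scalerAr in recip_eq.
have node_opp_neq0 : - node j != 0 by rewrite oppr_eq0 node_neq0.
rewrite mulrC -(dvdpZr _ _ node_opp_neq0) recip_eq.
by rewrite !dvdpZr ?dvdpp ?etaL_lead_neq0 ?oppr_eq0 ?expr2_eq1_neq0.
Qed.

End Lagrange.

Section Embedding.
Variables (F : fieldType) (s l : nat) (al be : F).
Hypotheses (s_gt0 : (0 < s)%N) (l_gt0 : (0 < l)%N).
Local Notation E := (emb s l al be).
Local Notation Ms := (md s al).
Local Notation Ml := (md l be).
Implicit Types (f g h u : {poly F}) (c d : 'M[F]_(s, l)).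

(* [ycomb (fun t => z ^+ t) c] is [c(x, z)]. *)
Definition ycomb (k : 'I_l -> F) c : {poly F} := \sum_(t < l) k t *: px c t.

Lemma embE f g i j : E f g i j = (f %% Ms)`_i * (g %% Ml)`_j.
Proof. exact: mxE. Qed.

Lemma emb_modl f f' g : f %% Ms = f' %% Ms -> E f g = E f' g.
Proof. by move=> eq_f; apply/matrixP => i j; rewrite !embE eq_f. Qed.

Lemma emb_modr f g g' : g %% Ml = g' %% Ml -> E f g = E f g'.
Proof. by move=> eq_g; apply/matrixP => i j; rewrite !embE eq_g. Qed.

Lemma emb_modpl f g : E (f %% Ms) g = E f g.
Proof. by apply: emb_modl; rewrite modp_id. Qed.

Lemma embDl f f' g : E (f + f') g = E f g + E f' g.
Proof. by apply/matrixP => i j; rewrite !mxE modpD coefD mulrDl. Qed.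

Lemma embZl k f g : E (k *: f) g = k *: E f g.
Proof. by apply/matrixP => i j; rewrite !mxE modpZl coefZ mulrA. Qed.

Lemma embZr k f g : E f (k *: g) = k *: E f g.
Proof. by apply/matrixP => i j; rewrite !mxE modpZl coefZ mulrCA. Qed.

Lemma emb0l g : E 0 g = 0.
Proof. by apply/matrixP => i j; rewrite !mxE mod0p coef0 mul0r. Qed.

Lemma emb_suml (I : Type) (r : seq I) (P : pred I) (G : I -> {poly F}) g :
  E (\sum_(i <- r | P i) G i) g = \sum_(i <- r | P i) E (G i) g.
Proof. exact: (big_morph (fun f => E f g) (fun f f' => embDl f f' g) (emb0l g)). Qed.

Lemma emb_sumr (I : Type) (r : seq I) (P : pred I) (G : I -> {poly F}) f :
  E f (\sum_(i <- r | P i) G i) = \sum_(i <- r | P i) E f (G i).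
Proof.
apply: (big_morph (E f)) => [g g'|]; apply/matrixP => i j; rewrite !mxE.
  by rewrite modpD coefD mulrDr.
by rewrite mod0p coef0 mulr0.
Qed.

Lemma coef_px c t (i : 'I_s) : (px c t)`_i = c i t.
Proof. exact: coef_sum_scale_Xn. Qed.

Lemma size_px c t : (size (px c t) <= s)%N.
Proof.
apply/leq_sizeP => k le_s_k; rewrite coef_sum big1 // => i _.
by rewrite coefZ coefXn gtn_eqF ?mulr0 // (leq_trans (ltn_ord i)).
Qed.

Lemma px_emb f g t : px (E f g) t = (g %% Ml)`_t *: (f %% Ms).
Proof.
rewrite /px [in RHS](poly_sum_coef (size_modp_md al s_gt0 f)) scaler_sumr.
by apply: eq_bigr => i _; rewrite embE scalerA mulrC.
Qed.

Lemma coef_ycomb k c (i : 'I_s) : (ycomb k c)`_i = \sum_(t < l) k t * c i t.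
Proof. by rewrite coef_sum; apply: eq_bigr => t _; rewrite coefZ coef_px. Qed.

Lemma size_ycomb k c : (size (ycomb k c) <= s)%N.
Proof.
apply/leq_sizeP => m le_s_m; rewrite coef_sum big1 // => t _.
by rewrite coefZ nth_default ?mulr0 // (leq_trans (size_px c t)).
Qed.

Lemma emb_modMl f h g : E ((f %% Ms) * h) g = E (f * h) g.
Proof. by apply: emb_modl; rewrite modp_mulml. Qed.

Lemma emb_modMr f g h : E f ((g %% Ml) * h) = E f (g * h).
Proof. by apply: emb_modr; rewrite modp_mulml. Qed.

Lemma mulR_embl f g d : mulR al be (E f g) d = \sum_(t < l) E (f * px d t) (g * 'X^t).
Proof.
rewrite /mulR exchange_big /=; apply: eq_bigr => t _.
rewrite -emb_modMr [X in X * 'X^t](poly_sum_coef (size_modp_md be l_gt0 g)).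
rewrite [X in _ = E _ X]mulr_suml emb_sumr; apply: eq_bigr => j _.
by rewrite px_emb -scalerAl -scalerAl embZl embZr emb_modMl exprD.
Qed.

Lemma mulR_embr c f g : mulR al be c (E f g) = \sum_(t < l) E (px c t * f) ('X^t * g).
Proof.
rewrite /mulR; apply: eq_bigr => t _.
rewrite [('X^t * g)]mulrC -emb_modMr.
rewrite [X in X * 'X^t](poly_sum_coef (size_modp_md be l_gt0 g)).
rewrite [X in _ = E _ X]mulr_suml emb_sumr; apply: eq_bigr => j _.
by rewrite px_emb -!scalerAr -scalerAl embZl embZr mulrC emb_modMl mulrC addnC exprD.
Qed.

Lemma mulR_emb f g f' g' : mulR al be (E f g) (E f' g') = E (f * f') (g * g').
Proof.
rewrite mulR_embl [g * g']mulrC -emb_modMr.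
rewrite [X in X * g](poly_sum_coef (size_modp_md be l_gt0 g')).
rewrite [X in _ = E _ X]mulr_suml emb_sumr; apply: eq_bigr => t _.
rewrite px_emb -scalerAr -scalerAl embZl embZr [f * (f' %% Ms)]mulrC.
by rewrite emb_modMl [f' * f]mulrC [g * _]mulrC.
Qed.

Lemma emb_mulXn_eigen z f g n : Ml %| ('X - z%:P) * g -> E f ('X^n * g) = z ^+ n *: E f g.
Proof.
move=> dvd_g; rewrite -embZr -mul_polyC; apply/emb_modr/modp_dvdp_sub; rewrite -mulrBl.
have /dvdpP [k ->] : ('X - z%:P) %| 'X^n - (z ^+ n)%:P.
  by rewrite dvdp_XsubCl /root !hornerE subrr.
by rewrite -mulrA dvdp_mull.
Qed.

Lemma mulR_emb_eigenl z f g d : Ml %| ('X - z%:P) * g ->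
  mulR al be (E f g) d = E (f * ycomb (fun t => z ^+ t) d) g.
Proof.
move=> dvd_g; rewrite mulR_embl /ycomb mulr_sumr emb_suml; apply: eq_bigr => t _.
by rewrite [g * _]mulrC (emb_mulXn_eigen _ _ dvd_g) -embZl -scalerAr.
Qed.

Lemma mulR_emb_eigenr z c f g : Ml %| ('X - z%:P) * g ->
  mulR al be c (E f g) = E (ycomb (fun t => z ^+ t) c * f) g.
Proof.
move=> dvd_g; rewrite mulR_embr /ycomb mulr_suml emb_suml; apply: eq_bigr => t _.
by rewrite (emb_mulXn_eigen _ _ dvd_g) -embZl -scalerAl.
Qed.

Lemma dotRC c d : dotR c d = dotR d c.
Proof. by apply: eq_bigr => i _; apply: eq_bigr => j _; rewrite mulrC. Qed.

Lemma dotR_emb f g d :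
  dotR (E f g) d = \sum_(i < s) (f %% Ms)`_i * (ycomb (fun t => (g %% Ml)`_t) d)`_i.
Proof.
apply: eq_bigr => i _; rewrite coef_ycomb mulr_sumr; apply: eq_bigr => t _.
by rewrite embE mulrA.
Qed.

Lemma dotR_emb_emb f g f' g' : dotR (E f g) (E f' g') =
  (\sum_(i < s) (f %% Ms)`_i * (f' %% Ms)`_i) * \sum_(t < l) (g %% Ml)`_t * (g' %% Ml)`_t.
Proof.
rewrite mulr_suml; apply: eq_bigr => i _; rewrite mulr_sumr; apply: eq_bigr => t _.
by rewrite !embE mulrACA.
Qed.

Lemma dotR_sumr c (I : Type) (r : seq I) (P : pred I) (G : I -> 'M[F]_(s, l)) :
  dotR c (\sum_(i <- r | P i) G i) = \sum_(i <- r | P i) dotR c (G i).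
Proof.
apply: (big_morph (dotR c)) => [d d'|]; rewrite /dotR.
  rewrite -big_split; apply: eq_bigr => i _; rewrite -big_split.
  by apply: eq_bigr => t _; rewrite mxE mulrDr.
by rewrite big1 // => i _; rewrite big1 // => t _; rewrite mxE mulr0.
Qed.

Lemma dotR0r c : dotR c 0 = 0.
Proof. by rewrite /dotR big1 // => i _; rewrite big1 // => t _; rewrite mxE mulr0. Qed.

Lemma dotRZr c k d : dotR c (k *: d) = k * dotR c d.
Proof.
rewrite /dotR mulr_sumr; apply: eq_bigr => i _; rewrite mulr_sumr.
by apply: eq_bigr => t _; rewrite mxE mulrCA.
Qed.

End Embedding.

Section EtaCoordinates.
Variables (F : fieldType) (s l r : nat) (al be w : F).
Hypotheses (s_gt0 : (0 < s)%N) (l_gt0 : (0 < l)%N).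
Hypotheses (w_prim : (r * l)%N.-primitive_root w) (w_l : w ^+ l = be).
Local Notation E := (emb s l al be).
Local Notation Ms := (md s al).
Local Notation Ml := (md l be).
Local Notation eta := (etaL r w).
Local Notation etas j := (recip_n l.-1 (etaL r w j)).
Local Notation node := (node r w).
Local Notation kappa := (etaL_lead r w).
Implicit Types (j k : 'I_l) (c d : 'M[F]_(s, l)) (u : {poly F}).

Lemma etaL_modp j : eta j %% Ml = eta j.
Proof. exact/modp_md_small/(size_etaL l_gt0 w_prim w_l). Qed.

Lemma recip_etaL_modp j : etas j %% Ml = etas j.
Proof. exact/modp_md_small/size_recip_etaL. Qed.

Lemma md_dvdp_etaL j : Ml %| ('X - (node j)%:P) * eta j.
Proof. by rewrite mulrC (etaL_mulXsubC l_gt0 w_prim w_l) dvdpZr ?etaL_lead_neq0 ?dvdpp. Qed.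

Lemma dotR_emb_recip_etaL c u j : dotR c (E u (etas j)) =
  kappa j * \sum_(i < s) (u %% Ms)`_i * (ycomb (fun t => node j ^+ t) c)`_i.
Proof.
rewrite dotRC dotR_emb recip_etaL_modp mulr_sumr; apply: eq_bigr => i _.
rewrite mulrCA; congr (_ * _); rewrite !coef_ycomb mulr_sumr; apply: eq_bigr => t _.
by rewrite (coef_recip_etaL l_gt0 w_prim w_l) // mulrA.
Qed.

Lemma emb_recip_etaL_decomp d :
  d = \sum_(j < l) E ((kappa j)^-1 *: ycomb (fun t => (eta j)`_t) d) (etas j).
Proof.
apply/matrixP => i t'; rewrite summxE.
transitivity (\sum_(t < l) d i t * \sum_(j < l) (eta j)`_t * node j ^+ t').
  under eq_bigr do rewrite (sum_coef_etaL_node l_gt0 w_prim w_l).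
  by rewrite (bigD1 t') //= eqxx mulr1 big1 ?addr0 // => t /negPf ->; rewrite mulr0.
under eq_bigr do rewrite mulr_sumr.
rewrite exchange_big /=; apply: eq_bigr => j _.
rewrite embE recip_etaL_modp (modp_md_small _ s_gt0); last first.
  exact: leq_trans (size_scale_leq _ _) (size_ycomb _ _).
rewrite coefZ coef_ycomb (coef_recip_etaL l_gt0 w_prim w_l) // mulr_sumr mulr_suml.
apply: eq_bigr => t _; have := etaL_lead_neq0 l_gt0 w_prim j.
by move: (kappa j) => k k_neq0; field.
Qed.

Lemma dotR_emb_Xn_etaL (i0 : 'I_s) k j u :
  dotR (E 'X^i0 (eta k)) (E u (etas j)) = (k == j)%:R * kappa j * (u %% Ms)`_i0.
Proof.
rewrite dotR_emb_emb etaL_modp recip_etaL_modp (sum_coef_etaL_recip l_gt0 w_prim w_l).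
rewrite (modp_md_small _ s_gt0) ?size_polyXn // mulrC; congr (_ * _).
rewrite (bigD1 i0) //= coefXn eqxx mul1r big1 ?addr0 // => i /negPf i_neq_i0.
by rewrite coefXn val_eqE i_neq_i0 mul0r.
Qed.

Lemma emb_recip_etaL_eq0 u j : E u (etas j) = 0 -> u %% Ms = 0.
Proof.
move=> u0; apply: (modp_md_eq0 s_gt0) => i0; apply/eqP.
have := dotR_emb_Xn_etaL i0 j j u; rewrite u0 dotR0r eqxx mul1r => /esym/eqP.
by rewrite mulf_eq0 (negPf (etaL_lead_neq0 l_gt0 w_prim j)).
Qed.

Lemma sum_emb_recip_etaL_eq0 (u : 'I_l -> {poly F}) :
  \sum_(j < l) E (u j) (etas j) = 0 -> forall k, u k %% Ms = 0.
Proof.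
move=> sum0 k; apply: (modp_md_eq0 s_gt0) => i0; apply/eqP.
have := congr1 (dotR (E 'X^i0 (eta k))) sum0; rewrite dotR_sumr dotR0r.
rewrite (bigD1 k) //= big1 => [|j /negPf j_neq_k]; last first.
  by rewrite dotR_emb_Xn_etaL eq_sym j_neq_k !mul0r.
rewrite addr0 dotR_emb_Xn_etaL eqxx mul1r => /eqP.
by rewrite mulf_eq0 (negPf (etaL_lead_neq0 l_gt0 w_prim k)).
Qed.

End EtaCoordinates.

Lemma flatten_map_bigcat (T : Type) (l : nat) (X : 'I_l -> seq T) :
  flatten [seq X j | j <- enum 'I_l] = \big[cat/[::]]_(j < l) X j.
Proof. by rewrite /flatten foldrE big_map enumT. Qed.

Section DualCode.
Variables (F : finFieldType) (s l r : nat) (alpha beta w : F).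
Variables (C : {set 'M[F]_(s, l)}) (p p' : 'I_l -> {poly F}).
Hypotheses (s_gt0 : (0 < s)%N) (l_gt0 : (0 < l)%N).
Hypotheses (alpha2 : alpha ^+ 2 = 1) (beta2 : beta ^+ 2 = 1).
Hypotheses (w_prim : (r * l)%N.-primitive_root w) (w_l : w ^+ l = beta).
Hypothesis C_ideal : isIdealR alpha beta C.
Hypothesis C_etaL : forall j (f : {poly F}),
  emb s l alpha beta f (etaL r w j) \in C <-> exists g : {poly F}, md s alpha %| f - g * p j.
Hypothesis pp' : forall j, p j * p' j = md s alpha.

Local Notation E := (emb s l alpha beta).
Local Notation Ms := (md s alpha).
Local Notation eta := (etaL r w).
Local Notation etas j := (recip_n l.-1 (etaL r w j)).
Local Notation node := (node r w).
Local Notation kappa := (etaL_lead r w).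
Local Notation a j := (size (p j)).-1.
Local Notation q j := (recip (p' j)).
Implicit Types (j k : 'I_l) (c d v : 'M[F]_(s, l)) (f u H : {poly F}).

Lemma mem_dualR v : v \in dualR C <-> (forall c, c \in C -> dotR c v = 0).
Proof.
rewrite inE; split => [/forallP orth_v c c_in | orth_v].
  by apply/eqP; move/implyP: (orth_v c); apply.
by apply/forallP => c; apply/implyP => /orth_v ->.
Qed.

Lemma dualR_sum (I : Type) (rs : seq I) (P : pred I) (G : I -> 'M[F]_(s, l)) :
  (forall i, P i -> G i \in dualR C) -> \sum_(i <- rs | P i) G i \in dualR C.
Proof.
move=> dual_G; apply/mem_dualR => c c_in; rewrite dotR_sumr big1 // => i P_i.
exact: (mem_dualR _).1 (dual_G i P_i) c c_in.
Qed.

Lemma dualRZ (k : F) v : v \in dualR C -> k *: v \in dualR C.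
Proof.
by move=> /mem_dualR orth_v; apply/mem_dualR => c /orth_v; rewrite dotRZr => ->; rewrite mulr0.
Qed.

Lemma ycomb_node_dvdp c j : c \in C ->
  exists g : {poly F}, Ms %| ycomb (fun t => node j ^+ t) c - g * p j.
Proof.
case: C_ideal => _ _ C_mul c_in; apply/C_etaL; rewrite -[ycomb _ _]mul1r.
by rewrite -(mulR_emb_eigenl _ s_gt0 l_gt0 _ _ (md_dvdp_etaL l_gt0 w_prim w_l j)) C_mul.
Qed.

Lemma emb_recip_dual j H : (size H <= a j)%N -> E (H * q j) (etas j) \in dualR C.
Proof.
move=> le_H; apply/mem_dualR => c /(ycomb_node_dvdp j) [g /modp_dvdp_sub ycomb_eq].
rewrite (dotR_emb_recip_etaL _ l_gt0 w_prim w_l).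
rewrite modp_md_small ?(size_mul_recip s_gt0 (pp' j)) //.
have -> : ycomb (fun t => node j ^+ t) c = (g * p j) %% Ms.
  by rewrite -ycomb_eq modp_md_small ?size_ycomb.
rewrite -[RHS](mulr0 (kappa j)) -[in RHS](recip_factor_orth s_gt0 (pp' j) g le_H).
by congr (_ * _); apply: eq_bigr => i _; rewrite mulrC.
Qed.

Lemma ycomb_etaL_orth d j g : d \in dualR C ->
  \sum_(i < s) ((g * p j) %% Ms)`_i * (ycomb (fun t => (eta j)`_t) d)`_i = 0.
Proof.
move/mem_dualR => orth_d; have gp_in : E (g * p j) (eta j) \in C.
  by apply/C_etaL; exists g; rewrite subrr dvdp0.
by rewrite -[RHS](orth_d _ gp_in) dotR_emb (etaL_modp l_gt0 w_prim w_l).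
Qed.

Lemma dualR_decomp d : d \in dualR C -> exists H : 'I_l -> {poly F},
  (forall j, size (H j) <= a j)%N /\ d = \sum_(j < l) E (H j * q j) (etas j).
Proof.
move=> d_dual; pose u j := (kappa j)^-1 *: ycomb (fun t => (eta j)`_t) d.
have u_factor j : exists2 H : {poly F}, (size H <= a j)%N & u j = H * q j.
  apply: (dual_factor_recip s_gt0 (pp' j)).
    exact: leq_trans (size_scale_leq _ _) (size_ycomb _ _).
  move=> g; under eq_bigr do rewrite coefZ mulrCA.
  by rewrite -mulr_sumr ycomb_etaL_orth ?mulr0.
have [H le_H u_eq] := fin_all_exists2 u_factor.
exists H; split => //; rewrite {1}(emb_recip_etaL_decomp alpha s_gt0 l_gt0 w_prim w_l d).
by apply: eq_bigr => j _; rewrite -u_eq.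
Qed.

Lemma mulR_recip_dual c j : mulR alpha beta c (E (q j) (etas j)) \in dualR C.
Proof.
rewrite (mulR_emb_eigenr _ s_gt0 l_gt0 _ _ (md_dvdp_recip_etaL l_gt0 w_prim w_l beta2 j)).
have [H le_H H_eq] :=
  modp_mul_recip_factor s_gt0 alpha2 (pp' j) (ycomb (fun t => (node j)^-1 ^+ t) c).
by rewrite -emb_modpl H_eq emb_recip_dual.
Qed.

Definition dual_basis j := [seq E ('X^i * q j) (etas j) | i <- iota 0 (a j)].

Lemma size_dual_basis j : size (dual_basis j) = a j.
Proof. by rewrite size_map size_iota. Qed.

Lemma dual_basis_comb j (k : 'I_(size (dual_basis j)) -> F) :
  \sum_i k i *: (dual_basis j)`_i = E ((\sum_i k i *: 'X^i) * q j) (etas j).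
Proof.
rewrite mulr_suml emb_suml; apply: eq_bigr => i _.
rewrite (nth_map 0%N); last by rewrite size_iota -size_dual_basis.
by rewrite nth_iota ?add0n -?size_dual_basis // -embZl scalerAl.
Qed.

Lemma span_dual_basis j v : v \in <<dual_basis j>>%VS ->
  exists2 H : {poly F}, (size H <= a j)%N & v = E (H * q j) (etas j).
Proof.
move=> v_span; pose k i := coord (in_tuple (dual_basis j)) i v.
have -> : v = \sum_i k i *: (dual_basis j)`_i.
  exact: (coord_span (X := in_tuple (dual_basis j)) v_span).
rewrite dual_basis_comb; eexists; last by [].
by rewrite -size_dual_basis size_sum_scale_Xn.
Qed.

Lemma free_dual_basis j : free (dual_basis j).
Proof.
suff : free (in_tuple (dual_basis j)) by [].
apply/freeP => k /=; rewrite dual_basis_comb.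
move/(emb_recip_etaL_eq0 s_gt0 l_gt0 w_prim w_l).
rewrite (modp_md_small _ s_gt0); last first.
  by apply: (size_mul_recip s_gt0 (pp' j)); rewrite -size_dual_basis size_sum_scale_Xn.
move/eqP; rewrite mulf_eq0 (negPf (recip_factor_neq0 s_gt0 alpha2 (pp' j))) orbF.
by move/eqP/polyP => k0 i; rewrite -coef_sum_scale_Xn k0 coef0.
Qed.

Lemma directv_dual_basis : directv (\sum_(j < l) <<dual_basis j>>).
Proof.
apply/directv_sum_independent => v v_span sum0 k _.
have /fin_all_exists2 [H _ v_eq] := fun j => span_dual_basis (v_span j isT).
have sumH0 : \sum_(j < l) E (H j * q j) (etas j) = 0.
  by rewrite -[RHS]sum0; apply: eq_bigr => j _; rewrite v_eq.
have := sum_emb_recip_etaL_eq0 s_gt0 l_gt0 w_prim w_l sumH0 k.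
by rewrite v_eq -emb_modpl => ->; rewrite emb0l.
Qed.

Lemma free_dual_basis_cat : free (flatten [seq dual_basis j | j <- enum 'I_l]).
Proof.
rewrite flatten_map_bigcat; apply: bigcat_free => [|j _].
  exact: directv_dual_basis.
exact: free_dual_basis.
Qed.

Lemma dualR_span v :
  v \in dualR C <-> v \in <<flatten [seq dual_basis j | j <- enum 'I_l]>>%VS.
Proof.
set B := flatten _; split=> [/dualR_decomp [H [le_H ->]] | v_span]; last first.
  rewrite (coord_span (X := in_tuple B) v_span); apply: dualR_sum => i _; apply: dualRZ.
  have /flatten_mapP [j _ /mapP [n n_in ->]] : B`_i \in B by apply: mem_nth.
  by apply: emb_recip_dual; rewrite size_polyXn; move: n_in; rewrite mem_iota.
apply: memv_suml => j _; rewrite (poly_sum_coef (le_H j)) mulr_suml emb_suml.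
apply: memv_suml => i _; rewrite -scalerAl embZl; apply/memvZ/memv_span.
apply/flatten_mapP; exists j; first by rewrite mem_enum.
by apply/mapP; exists (nat_of_ord i); rewrite // mem_iota add0n ltn_ord.
Qed.

Lemma dualR_ideal_gen v : v \in dualR C <->
  exists c : 'I_l -> 'M[F]_(s, l), v = \sum_(j < l) mulR alpha beta (c j) (E (q j) (etas j)).
Proof.
split=> [/dualR_decomp [H [_ ->]] | [c ->]]; last first.
  by apply: dualR_sum => j _; apply: mulR_recip_dual.
exists (fun j => E (H j) 1); apply: eq_bigr => j _.
by rewrite (mulR_emb _ _ s_gt0 l_gt0) mul1r.
Qed.

End DualCode.

Theorem theorem3 (F : finFieldType) (s l r : nat) (alpha beta w : F)
  (C : {set 'M[F]_(s, l)}) (p p' : 'I_l -> {poly F}) :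
  (0 < s)%N -> (0 < l)%N ->
  (alpha = 1 \/ alpha = -1) -> (beta = 1 \/ beta = -1) ->
  r.-primitive_root beta ->
  (#|F| = 1 %[mod r * l])%N ->
  (r * l)%N.-primitive_root w -> w ^+ l = beta ->
  isIdealR alpha beta C ->
  (forall j, p j \is monic) ->
  (forall j, p j %| md s alpha) ->
  (forall j (f : {poly F}),
      emb s l alpha beta f (etaL r w j) \in C <->
      exists g : {poly F}, md s alpha %| f - g * p j) ->
  (forall j, p j * p' j = md s alpha) ->
  let g j := emb s l alpha beta (recip (p' j)) (recip_n l.-1 (etaL r w j)) in
  let B := flatten [seq [seq emb s l alpha beta ('X^i * recip (p' j))
                                   (recip_n l.-1 (etaL r w j))
                         | i <- iota 0 (size (p j)).-1] | j <- enum 'I_l] in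
  (forall v, v \in dualR C <->
     exists rr : 'I_l -> 'M[F]_(s, l), v = \sum_(j < l) mulR alpha beta (rr j) (g j))
  /\ (free B /\ forall v, v \in dualR C <-> v \in <<B>>%VS).
Proof.
move=> s_gt0 l_gt0 alpha_pm1 beta_pm1 _ _ w_prim w_l C_ideal _ _ C_etaL pp' g B.
have sqr_pm1 (x : F) : x = 1 \/ x = -1 -> x ^+ 2 = 1.
  by case=> ->; rewrite ?sqrrN expr1n.
have alpha2 := sqr_pm1 _ alpha_pm1; have beta2 := sqr_pm1 _ beta_pm1.
split; first exact: dualR_ideal_gen.
split; first exact: free_dual_basis_cat.
exact: dualR_span.
Qed.
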